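(* Let $k$ be a commutative ring and $A$ a unital involutive associative $k$-algebra. There is an isomorphism \[HO_0(A)\cong \frac{A}{(a_0a_1a_2-a_2\overline{a_1}a_0)},\] where $(a_0a_1a_2-a_2\overline{a_1}a_0)$ denotes the two-sided ideal of $A$ generated by all elements $a_0a_1a_2-a_2\overline{a_1}a_0$ with $a_0,a_1,a_2\in A$. In particular, $HO_0(A)$ has a ring structure induced from the ring structure of $A$.
   Context: An involutive $k$-algebra is a unital associative $k$-algebra with a $k$-linear map $a\mapsto\overline{a}$ with $\overline{\overline{a}}=a$, $\overline{ab}=\overline{b}\,\overline{a}$, $\overline 1=1$. Let $C_2=\{1,t\}$. The hyperoctahedral category $\Delta H$: objects $[n]=\{0,\dots,n\}$, $n\ge0$; a morphism $f:[n]\to[m]$ is a map of sets with a total order on each fibre and a $C_2$-label on each element of $[n]$; composition $g\circ f$ has fibre over $i$ equal to the concatenation, in the order of $g^{-1}(i)$, of the fibres $f^{-1}(j)$, each replaced by $f^{-1}(j)^t$ (order reversed, labels multiplied by $t$) when $j$ has label $t$ in $g$; labels multiply. The hyperoctahedral bar construction $\mathsf{H}_A:\Delta H\to\mathbf{Mod}_k$ sends $[n]\mapsto A^{\otimes(n+1)}$ and $f$ to $a_0\otimes\cdots\otimes a_n\mapsto b_0\otimes\cdots\otimes b_m$, $b_i$ being the ordered product over $x\in f^{-1}(i)$ of $a_x$ (label $1$) or $\overline{a_x}$ (label $t$), empty product $1_A$. Hyperoctahedral homology is $HO_n(A)=\mathrm{Tor}_n^{\Delta H}(k^{\star},\mathsf{H}_A)$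 with $k^{\star}$ the constant right $\Delta H$-module at $k$. *)

From HB Require Import structures.
From mathcomp Require Import all_boot all_order all_algebra.
Set Implicit Arguments. Unset Strict Implicit. Unset Printing Implicit Defensive.
Import GRing.Theory.
Local Open Scope ring_scope.

Definition involution (k : comPzRingType) (A : algType k) (bar : A -> A) : Prop :=
  [/\ forall (c : k) (a b : A), bar (c *: a + b) = c *: bar a + bar b,
      forall a, bar (bar a) = a,
      forall a b, bar (a * b) = bar b * bar a
    & bar 1 = 1].

(* A morphism [n] -> [m] of the hyperoctahedral category Delta H, with
   [n] = 'I_n.+1.  [fib f i] is the fibre over i, listed in its total order;
   every element of [n] lies in exactly one fibre exactly once.  [lab f x]
   is the C_2-label of x ([true] = t). *)
Record DHmor (n m : nat) := DHMor {
  fib : 'I_m.+1 -> seq 'I_n.+1;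
  lab : 'I_n.+1 -> bool;
  fib_ok : perm_eq (flatten [seq fib i | i <- enum 'I_m.+1]) (enum 'I_n.+1) }.

Section Bar.
Variables (k : comPzRingType) (A : algType k) (bar : A -> A).

(* Action of the hyperoctahedral bar construction H_A on pure tensors
   a_0 (x) ... (x) a_n, represented by a : 'I_n.+1 -> A. *)
Definition Hact n m (f : DHmor n m) (a : 'I_n.+1 -> A) : 'I_m.+1 -> A :=
  fun i => \prod_(x <- fib f i) (if lab f x then bar (a x) else a x).

Definition upd n (a : 'I_n.+1 -> A) (i : 'I_n.+1) (x : A) : 'I_n.+1 -> A :=
  fun j => if j == i then x else a j.

(* k-multilinear maps A^{n+1} -> M, i.e. k-linear maps A^{(x)(n+1)} -> M. *)
Definition multilinear (M : lmodType k) n (psi : ('I_n.+1 -> A) -> M) : Prop :=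
  forall (a : 'I_n.+1 -> A) (i : 'I_n.+1) (c : k) (x y : A),
    psi (upd a i (c *: x + y)) = c *: psi (upd a i x) + psi (upd a i y).

Definition cocone (M : lmodType k) (psi : forall n, ('I_n.+1 -> A) -> M) : Prop :=
  (forall n, multilinear (psi n)) /\
  (forall n m (f : DHmor n m) (a : 'I_n.+1 -> A), psi m (Hact f a) = psi n a).

(* (M, psi) is a colimit of H_A over Delta H, i.e. M = k^* (x)_{Delta H} H_A
   = Tor_0^{Delta H}(k^*, H_A) = HO_0(A). *)
Definition is_HO0 (M : lmodType k) (psi : forall n, ('I_n.+1 -> A) -> M) : Prop :=
  cocone psi /\
  forall (N : lmodType k) (chi : forall n, ('I_n.+1 -> A) -> N), cocone chi ->
    (exists u : {linear M -> N}, forall n a, u (psi n a) = chi n a) /\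
    (forall u v : {linear M -> N},
        (forall n a, u (psi n a) = chi n a) ->
        (forall n a, v (psi n a) = chi n a) -> u =1 v).

Definition in_HO_ideal (x : A) : Prop :=
  forall P : A -> Prop,
    P 0 ->
    (forall u v, P u -> P v -> P (u + v)) ->
    (forall u b v, P b -> P (u * b * v)) ->
    (forall a0 a1 a2, P (a0 * a1 * a2 - a2 * bar a1 * a0)) ->
    P x.

End Bar.

From HB Require Import structures.
From mathcomp Require Import all_boot all_order all_algebra.
Set Implicit Arguments. Unset Strict Implicit. Unset Printing Implicit Defensive.
Import GRing.Theory.
Local Open Scope ring_scope.

(* Modulo the ideal I generated by a0 a1 a2 - a2 (bar a1) a0, the algebra A
   becomes commutative (a1 = 1) and bar becomes the identity (a0 = a2 = 1), so
   a |-> pi (a_0 ... a_n) is a cocone under H_A: the structure maps only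
   permute the factors and apply bar to some of them.  Conversely, the
   collapses [n] -> [0] show that a cocone chi is determined by the linear map
   chi_0 on [0], via chi_n a = chi_0 (a_0 ... a_n); comparing two collapses of
   a 5-tuple shows that chi_0 kills I, hence factors uniquely through pi. *)

Section HOIdeal.
Variables (k : comPzRingType) (A : algType k) (bar : A -> A).

Local Notation I := (in_HO_ideal bar).

Lemma in_HO_ideal_gen a0 a1 a2 : I (a0 * a1 * a2 - a2 * bar a1 * a0).
Proof. by move=> P _ _ _ Pgen. Qed.

Lemma in_HO_ideal0 : I 0.
Proof. by move=> P P0 _ _ _. Qed.

Lemma in_HO_idealD x y : I x -> I y -> I (x + y).
Proof.
move=> Ix Iy P P0 PD PM Pgen.
exact: PD (Ix P P0 PD PM Pgen) (Iy P P0 PD PM Pgen).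
Qed.

Lemma in_HO_idealM u x v : I x -> I (u * x * v).
Proof. by move=> Ix P P0 PD PM Pgen; exact: PM (Ix P P0 PD PM Pgen). Qed.

Lemma in_HO_idealN x : I x -> I (- x).
Proof. by move=> /(in_HO_idealM (-1) 1); rewrite mulr1 mulN1r. Qed.

Lemma linear_HO_ideal_eq0 (N : lmodType k) (f : {linear A -> N}) :
  (forall u v a0 a1 a2, f (u * (a0 * a1 * a2 - a2 * bar a1 * a0) * v) = 0) ->
  forall x, I x -> f x = 0.
Proof.
move=> f_gen x Ix; suff /(_ 1 1) : forall u v, f (u * x * v) = 0.
  by rewrite mulr1 mul1r.
apply: (Ix (fun y => forall u v, f (u * y * v) = 0)).
- by move=> u v; rewrite mulr0 mul0r linear0.
- by move=> x1 x2 f1 f2 u v; rewrite mulrDr mulrDl linearD f1 f2 addr0.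
- by move=> u1 y v1 fy u v; rewrite !mulrA -(mulrA _ v1) fy.
- by move=> a0 a1 a2 u v; apply: f_gen.
Qed.

Definition HO_equiv x y := I (x - y).

Local Infix "~=" := HO_equiv (at level 70).

Lemma HO_equiv_refl x : x ~= x.
Proof. by rewrite /HO_equiv subrr; apply: in_HO_ideal0. Qed.

Lemma HO_equiv_sym x y : x ~= y -> y ~= x.
Proof. by rewrite /HO_equiv -opprB => /in_HO_idealN; rewrite opprK. Qed.

Lemma HO_equiv_trans x y z : x ~= y -> y ~= z -> x ~= z.
Proof. by move=> Ixy Iyz; rewrite /HO_equiv -(subrK y x) -addrA; apply: in_HO_idealD. Qed.

Lemma HO_equivM x x' y y' : x ~= x' -> y ~= y' -> x * y ~= x' * y'.
Proof.
move=> /(in_HO_idealM 1 y) Ix /(in_HO_idealM x' 1) Iy.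
rewrite mul1r mulrBl in Ix; rewrite mulr1 mulrBr in Iy.
exact: HO_equiv_trans Ix Iy.
Qed.

Lemma HO_equiv_bar x : bar x ~= x.
Proof.
by apply: HO_equiv_sym; have := in_HO_ideal_gen 1 x 1; rewrite !mulr1 !mul1r.
Qed.

Lemma HO_equiv_prod_bar (T : Type) (s : seq T) (F : T -> A) (l : T -> bool) :
  \prod_(x <- s) (if l x then bar (F x) else F x) ~= \prod_(x <- s) F x.
Proof.
elim: s => [|x s IHs]; first by rewrite !big_nil; apply: HO_equiv_refl.
rewrite !big_cons; apply: HO_equivM IHs.
by case: (l x); [apply: HO_equiv_bar | apply: HO_equiv_refl].
Qed.

Section Commutative.
Hypothesis bar1 : bar 1 = 1.

Lemma HO_equiv_comm x y : x * y ~= y * x.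
Proof. by have := in_HO_ideal_gen x 1 y; rewrite bar1 !mulr1. Qed.

Lemma HO_equiv_prod_rem (T : eqType) (s : seq T) (F : T -> A) x : x \in s ->
  \prod_(y <- s) F y ~= F x * \prod_(y <- rem x s) F y.
Proof.
elim: s => [|y s IHs] //=; rewrite inE big_cons.
have [-> _|neq_yx /= xs] := eqVneq y x; first exact: HO_equiv_refl.
apply: HO_equiv_trans (HO_equivM (HO_equiv_refl (F y)) (IHs xs)) _.
by rewrite big_cons !mulrA; exact: HO_equivM (HO_equiv_comm _ _) (HO_equiv_refl _).
Qed.

Lemma HO_equiv_perm_prod (T : eqType) (s t : seq T) (F : T -> A) :
  perm_eq s t -> \prod_(y <- s) F y ~= \prod_(y <- t) F y.
Proof.
elim: s t => [|x s IHs] t.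
  by rewrite perm_sym => /perm_nilP ->; apply: HO_equiv_refl.
move=> st; have xt : x \in t by rewrite -(perm_mem st) mem_head.
apply: HO_equiv_sym; apply: HO_equiv_trans (HO_equiv_prod_rem F xt) _.
rewrite big_cons; apply: HO_equivM (HO_equiv_refl _) _; apply: HO_equiv_sym.
by apply: IHs; rewrite -(perm_cons x) (perm_trans st) // perm_to_rem.
Qed.

End Commutative.

End HOIdeal.

Lemma prod_upd_linear (k : comPzRingType) (A : algType k) n (a : 'I_n.+1 -> A)
    i c x y (s : seq 'I_n.+1) : uniq s -> i \in s ->
  \prod_(j <- s) upd a i (c *: x + y) j =
  c *: \prod_(j <- s) upd a i x j + \prod_(j <- s) upd a i y j.
Proof.
elim: s => [|j s IHs] //= /andP[js us]; rewrite inE !big_cons.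
have [<- _|neq_ji /= si] := eqVneq j i; last first.
  by rewrite IHs // /upd (negbTE neq_ji) mulrDr scalerAr.
have upd_off z : \prod_(l <- s) upd a j z l = \prod_(l <- s) a l.
  by apply: eq_big_seq => l ls; rewrite /upd; case: eqP => // lj; rewrite -lj ls in js.
by rewrite !upd_off /upd eqxx mulrDl scalerAl.
Qed.

Section CoconeOfLinearMap.
Variables (k : comPzRingType) (A : algType k) (bar : A -> A) (M : lmodType k).
Variable f : {linear A -> M}.

Lemma multilinear_prod n :
  multilinear (fun a : 'I_n.+1 -> A => f (\prod_(i <- enum 'I_n.+1) a i)).
Proof. by move=> a i c x y; rewrite prod_upd_linear ?enum_uniq ?mem_enum // linearP. Qed.

Hypothesis bar1 : bar 1 = 1.

Lemma Hact_prod_equiv n m (g : DHmor n m) (a : 'I_n.+1 -> A) :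
  HO_equiv bar (\prod_(i <- enum 'I_m.+1) Hact bar g a i) (\prod_(x <- enum 'I_n.+1) a x).
Proof.
rewrite /Hact -(big_map (fib g) xpredT (fun s => \prod_(x <- s) _)) -big_flatten.
exact: HO_equiv_trans (HO_equiv_prod_bar _ _ _) (HO_equiv_perm_prod bar1 _ (fib_ok g)).
Qed.

Hypothesis f_ideal : forall x, in_HO_ideal bar x -> f x = 0.

Lemma linear_HO_equiv x y : HO_equiv bar x y -> f x = f y.
Proof. by move/f_ideal/eqP; rewrite linearB subr_eq0 => /eqP. Qed.

Lemma cocone_linear_prod : cocone bar (fun n a => f (\prod_(i <- enum 'I_n.+1) a i)).
Proof.
split => [n|n m g a]; first exact: multilinear_prod.
exact: linear_HO_equiv (Hact_prod_equiv g a).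
Qed.

End CoconeOfLinearMap.

Lemma enum_ord1 : enum 'I_1 = [:: ord0].
Proof. by rewrite enum_ordSl enum_ord0. Qed.

Lemma perm_fib_to0 n (s : seq 'I_n.+1) : perm_eq s (enum 'I_n.+1) ->
  perm_eq (flatten [seq s | _ <- enum 'I_1]) (enum 'I_n.+1).
Proof. by rewrite enum_ord1 /= cats0. Qed.

Definition DHmor_to0 n (s : seq 'I_n.+1) (l : 'I_n.+1 -> bool)
    (s_enum : perm_eq s (enum 'I_n.+1)) : DHmor n 0 :=
  @DHMor n 0 (fun _ => s) l (perm_fib_to0 s_enum).

Lemma perm_enum_inord n (r : seq nat) : perm_eq r (iota 0 n.+1) ->
  perm_eq [seq inord j | j <- r] (enum 'I_n.+1).
Proof.
move=> r_iota; apply: (perm_map_inj val_inj); rewrite val_enum_ord -map_comp.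
rewrite (eq_in_map (val \o inord) id r).1 ?map_id // => j /=.
by rewrite (perm_mem r_iota) mem_iota => /inordK.
Qed.

Lemma linear_factor_surj (R : pzRingType) (U V W : lmodType R)
    (p : {linear U -> V}) (f : {linear U -> W}) :
    (forall v, exists u, p u = v) -> (forall u, p u = 0 -> f u = 0) ->
  exists g : {linear V -> W}, forall u, g (p u) = f u.
Proof.
move=> p_surj f_ker.
have f_compat u u' : p u = p u' -> f u = f u'.
  move=> /eqP; rewrite -subr_eq0 -linearB => /eqP/f_ker/eqP.
  by rewrite linearB subr_eq0 => /eqP.
have p_surjb v : exists u, p u == v by have [u <-] := p_surj v; exists u.
pose g v := f (xchoose (p_surjb v)).
have g_p u : g (p u) = f u by apply: f_compat (eqP (xchooseP (p_surjb (p u)))).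
have g_lin : linear g.
  move=> c v w; have [u <-] := p_surj v; have [u' <-] := p_surj w.
  by rewrite -linearP !g_p linearP.
pose G : {linear V -> W} := HB.pack g (GRing.isLinear.Build R V W *:%R g g_lin).
by exists G.
Qed.

Section UniversalCocone.
Variables (k : comPzRingType) (A : algType k) (bar : A -> A) (N : lmodType k).
Variable chi : forall n, ('I_n.+1 -> A) -> N.
Hypothesis chi_cocone : cocone bar chi.

Definition cocone0 (x : A) : N := chi (fun _ : 'I_1 => x).

Lemma cocone_collapse n (s : seq 'I_n.+1) (l : 'I_n.+1 -> bool)
    (s_enum : perm_eq s (enum 'I_n.+1)) (a : 'I_n.+1 -> A) :
  chi a = cocone0 (\prod_(x <- s) (if l x then bar (a x) else a x)).
Proof. by rewrite -(chi_cocone.2 n 0%N (DHmor_to0 l s_enum) a). Qed.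

Lemma cocone_prod n (a : 'I_n.+1 -> A) :
  chi a = cocone0 (\prod_(i <- enum 'I_n.+1) a i).
Proof. exact: cocone_collapse (fun _ => false) (perm_refl _) a. Qed.

Lemma cocone0E (a : 'I_1 -> A) : chi a = cocone0 (a ord0).
Proof. by rewrite cocone_prod enum_ord1 big_seq1. Qed.

Lemma cocone0_is_linear : linear cocone0.
Proof.
move=> c x y; have upd0 z : chi (upd (fun _ : 'I_1 => 0) ord0 z) = cocone0 z.
  by rewrite cocone0E /upd eqxx.
by rewrite -!upd0; apply: chi_cocone.1.
Qed.

HB.instance Definition _ := GRing.isLinear.Build k A N *:%R cocone0 cocone0_is_linear.

(* Both sides are images of the same 5-tuple (u, a0, a1, a2, v) under the
   collapses to [0] with fibre orders 0 1 2 3 4 and 0 3 2 1 4 (label t on 2). *)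
Lemma cocone0_twist u v a0 a1 a2 :
  cocone0 (u * (a0 * a1 * a2) * v) = cocone0 (u * (a2 * bar a1 * a0) * v).
Proof.
pose a (i : 'I_5) := nth 0 [:: u; a0; a1; a2; v] i.
have E1 : chi a = cocone0 (u * (a0 * a1 * a2) * v).
  rewrite (cocone_collapse (fun _ => false) (@perm_enum_inord 4 [:: 0; 1; 2; 3; 4] isT)).
  by rewrite !big_cons big_nil /= /a !inordK // mulr1 !mulrA.
have E2 : chi a = cocone0 (u * (a2 * bar a1 * a0) * v).
  rewrite (cocone_collapse (fun i => val i == 2) (@perm_enum_inord 4 [:: 0; 3; 2; 1; 4] isT)).
  by rewrite !big_cons big_nil /= /a !inordK // mulr1 !mulrA.
by rewrite -E1 -E2.
Qed.

Lemma cocone0_HO_ideal x : in_HO_ideal bar x -> cocone0 x = 0.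
Proof.
apply: linear_HO_ideal_eq0 => u v a0 a1 a2.
by rewrite mulrBr mulrBl linearB /= cocone0_twist subrr.
Qed.

Lemma cocone_factor (Q : lmodType k) (pi : {linear A -> Q}) :
    (forall q, exists a, pi a = q) -> (forall a, pi a = 0 -> in_HO_ideal bar a) ->
  exists g : {linear Q -> N},
    forall n (a : 'I_n.+1 -> A), g (pi (\prod_(i <- enum 'I_n.+1) a i)) = chi a.
Proof.
move=> pi_surj pi_ker.
have [g g_pi] : exists g : {linear Q -> N}, forall a, g (pi a) = cocone0 a.
  by apply: linear_factor_surj pi_surj _ => a /pi_ker/cocone0_HO_ideal.
by exists g => n a; rewrite g_pi -cocone_prod.
Qed.

End UniversalCocone.

Theorem theorem5p8 (k : comPzRingType) (A : algType k) (bar : A -> A)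
    (Hbar : involution bar)
    (Q : lmodType k) (pi : {linear A -> Q})
    (pi_surj : forall q : Q, exists a : A, pi a = q)
    (pi_ker : forall a : A, pi a = 0 <-> in_HO_ideal bar a) :
  exists psi : forall n, ('I_n.+1 -> A) -> Q, is_HO0 bar psi.
Proof.
have bar1 : bar 1 = 1 by case: Hbar.
exists (fun n a => pi (\prod_(i <- enum 'I_n.+1) a i)); split.
  by apply: cocone_linear_prod bar1 _ => a /pi_ker.
move=> N chi chi_cocone; split.
  exact (cocone_factor chi_cocone pi_surj (fun a => proj1 (pi_ker a))).
move=> g h g_psi h_psi q; have [a <-] := pi_surj q.
have := g_psi 0%N (fun _ => a); have := h_psi 0%N (fun _ => a).
by rewrite enum_ord1 big_seq1 => -> ->.
Qed.
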